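(* Let $\Box$ be the full subcategory of $\mathbf{Poset}$ on the posets $[1]^n$ for $n \geq 0$, and let $\mathbf{Poset}_{\mathsf{compl},\mathsf{fin}}$ be the full subcategory of $\mathbf{Poset}$ on the finite posets that are complete. Then the inclusion $\Box \to \mathbf{Poset}_{\mathsf{compl},\mathsf{fin}}$ is an idempotent completion. That is: it is fully faithful, every idempotent in $\mathbf{Poset}_{\mathsf{compl},\mathsf{fin}}$ splits in $\mathbf{Poset}_{\mathsf{compl},\mathsf{fin}}$, and every finite complete poset is a retract, in $\mathbf{Poset}$, of $[1]^n$ for some $n \geq 0$.
   Context: $\mathbf{Poset}$ is the category of small posets and monotone maps; a poset is regarded as a category with at most one morphism $x \to y$, present exactly when $x \leq y$. $[1]$ is the poset $\{0 < 1\}$ and $[1]^n$ is its $n$-fold product (componentwise order). A poset is complete if every diagram in it has a limit; equivalently, every subset has a greatest lower bound. An idempotent $f\colon A \to A$ ($f^2=f$) splits if there are $r\colon A\to B$ and $s\colon B\to A$ with $rs=\mathrm{id}_B$ and $sr=f$. In that situation $B$ is called a retract of $A$. *)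

From mathcomp Require Import all_boot.
Set Implicit Arguments. Unset Strict Implicit. Unset Printing Implicit Defensive.

Record finPoset := FinPoset {
  carrier :> finType;
  ple : rel carrier;
  ple_refl : reflexive ple;
  ple_anti : antisymmetric ple;
  ple_trans : transitive ple }.

Definition monotone (A B : finPoset) (f : A -> B) : Prop :=
  forall x y : A, ple x y -> ple (f x) (f y).

Definition is_glb (A : finPoset) (S : {set A}) (m : A) : Prop :=
  (forall x, x \in S -> ple m x) /\
  (forall y : A, (forall x, x \in S -> ple y x) -> ple y m).

Definition complete (A : finPoset) : Prop :=
  forall S : {set A}, exists m : A, is_glb S m.

(* [1]^n : functions 'I_n -> bool, ordered componentwise (false < true) *)
Definition cube_le (n : nat) : rel {ffun 'I_n -> bool} :=
  fun f g => [forall i, f i ==> g i].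

Lemma cube_le_refl n : reflexive (@cube_le n).
Proof. by move=> f; apply/forallP=> i; apply/implyP. Qed.

Lemma cube_le_anti n : antisymmetric (@cube_le n).
Proof.
move=> f g /andP[/forallP H1 /forallP H2]; apply/ffunP=> i.
by move: (H1 i) (H2 i); case: (f i); case: (g i).
Qed.

Lemma cube_le_trans n : transitive (@cube_le n).
Proof.
move=> g f h /forallP H1 /forallP H2; apply/forallP=> i.
by move: (H1 i) (H2 i); case: (f i); case: (g i); case: (h i).
Qed.

Definition cube (n : nat) : finPoset :=
  FinPoset (@cube_le_refl n) (@cube_le_anti n) (@cube_le_trans n).

From mathcomp Require Import all_boot.
From Stdlib Require Import ClassicalEpsilon.
Set Implicit Arguments. Unset Strict Implicit. Unset Printing Implicit Defensive.

(** An idempotent monotone [f] on a complete poset splits through its set of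
    fixed points, which is complete since the meet of fixed points there is [f]
    applied to their meet in the ambient poset.  A finite complete poset [A] is
    a retract of the cube [[1]^A] of its subsets: a point goes to its down-set,
    and a subset to its join, i.e. the meet of its upper bounds. *)

Lemma cube_complete n : complete (cube n).
Proof.
move=> S; exists [ffun i => [forall g in S, (g : {ffun 'I_n -> bool}) i]]; split.
- move=> x xS; apply/forallP=> i; rewrite ffunE; apply/implyP=> /forall_inP; exact.
- move=> y Hy; apply/forallP=> i; rewrite ffunE; apply/implyP=> yi.
  apply/forall_inP=> x xS; move: (Hy x xS)=> /forallP /(_ i) /implyP; exact.
Qed.

Section CompleteFinPoset.

Variables (A : finPoset) (HA : complete A).

Definition glb (S : {set A}) : A :=
  proj1_sig (constructive_indefinite_description _ (HA S)).

Lemma glbP (S : {set A}) : is_glb S (glb S).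
Proof. exact: proj2_sig (constructive_indefinite_description _ (HA S)). Qed.

Lemma glb_lb (S : {set A}) x : x \in S -> ple (glb S) x.
Proof. by have [lb _] := glbP S; apply: lb. Qed.

Lemma glb_greatest (S : {set A}) y : (forall x, x \in S -> ple y x) -> ple y (glb S).
Proof. by have [_ gr] := glbP S; apply: gr. Qed.

Lemma glb_antitone (S T : {set A}) : S \subset T -> ple (glb T) (glb S).
Proof. by move=> /subsetP ST; apply: glb_greatest => x /ST; apply: glb_lb. Qed.

Definition upper_bounds (S : {set A}) : {set A} :=
  [set y | [forall x in S, ple x y]].

Definition lub (S : {set A}) : A := glb (upper_bounds S).

Lemma lub_monotone (S T : {set A}) : S \subset T -> ple (lub S) (lub T).
Proof.
move=> /subsetP ST; apply: glb_antitone; apply/subsetP=> y.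
by rewrite !inE => /forall_inP ubT; apply/forall_inP=> x /ST; apply: ubT.
Qed.

Definition down_set (a : A) : {set A} := [set x | ple x a].

Lemma lub_down_set a : lub (down_set a) = a.
Proof.
apply: ple_anti; apply/andP; split.
- by apply: glb_lb; rewrite inE; apply/forall_inP=> x; rewrite inE.
- apply: glb_greatest => y; rewrite inE => /forall_inP; apply.
  by rewrite inE ple_refl.
Qed.

End CompleteFinPoset.

Definition cube_of_set (A : finType) (S : {set A}) : cube #|A| :=
  [ffun i => enum_val i \in S].

Definition set_of_cube (A : finType) (g : cube #|A|) : {set A} :=
  [set x | (g : {ffun _ -> bool}) (enum_rank x)].

Lemma cube_of_setK (A : finType) : cancel (@cube_of_set A) (@set_of_cube A).
Proof. by move=> S; apply/setP=> x; rewrite inE ffunE enum_rankK. Qed.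

Lemma cube_of_set_monotone (A : finType) (S T : {set A}) :
  S \subset T -> cube_le (cube_of_set S) (cube_of_set T).
Proof.
by move=> /subsetP ST; apply/forallP=> i; rewrite !ffunE; apply/implyP=> /ST.
Qed.

Lemma set_of_cube_monotone (A : finType) (g h : cube #|A|) :
  cube_le g h -> set_of_cube g \subset set_of_cube h.
Proof. by move=> /forallP gh; apply/subsetP=> x; rewrite !inE; apply/implyP. Qed.

Lemma down_set_monotone (A : finPoset) (a b : A) :
  ple a b -> down_set a \subset down_set b.
Proof. by move=> ab; apply/subsetP=> x; rewrite !inE => /ple_trans; apply. Qed.

Lemma retract_cube (A : finPoset) : complete A ->
  exists (n : nat) (r : cube n -> A) (s : A -> cube n),
    [/\ monotone r, monotone s & forall a, r (s a) = a].
Proof.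
move=> HA; exists #|A|, (fun g => lub HA (set_of_cube g)),
  (fun a => cube_of_set (down_set a)); split.
- by move=> g h /set_of_cube_monotone; apply: lub_monotone.
- by move=> a b /down_set_monotone /cube_of_set_monotone.
- by move=> a; rewrite cube_of_setK lub_down_set.
Qed.

Section FixedPoints.

Variables (A : finPoset) (f : A -> A).

Definition fixPoset : finPoset :=
  @FinPoset {x : A | f x == x} (fun x y => ple (val x) (val y))
    (fun x => ple_refl (val x))
    (fun x y xy => val_inj (ple_anti xy))
    (fun x y z => @ple_trans A (val x) (val y) (val z)).

Hypotheses (f_mono : monotone f) (f_idem : forall x, f (f x) = f x).

Definition fix_of (a : A) : fixPoset := exist _ (f a) (introT eqP (f_idem a)).

Lemma fix_ofK (b : fixPoset) : fix_of (val b) = b.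
Proof. by apply: val_inj; rewrite /= (eqP (valP b)). Qed.

Lemma fixPoset_complete : complete A -> complete fixPoset.
Proof.
move=> HA S; exists (fix_of (glb HA (val @: S))); split.
- move=> b bS; rewrite -(fix_ofK b); apply: f_mono.
  by apply: glb_lb; apply: imset_f.
- move=> b lbS; rewrite -(fix_ofK b); apply: f_mono.
  by apply: glb_greatest => _ /imsetP[c cS ->]; apply: lbS.
Qed.

Lemma split_idempotent : complete A ->
  exists B : finPoset, complete B /\
    exists (r : A -> B) (s : B -> A),
      [/\ monotone r, monotone s,
          (forall b, r (s b) = b) & (forall a, s (r a) = f a)].
Proof.
move=> HA; exists fixPoset; split; first exact: fixPoset_complete.
exists fix_of, val; split=> //.
exact: fix_ofK.
Qed.

End FixedPoints.

Theorem mainTheorem1 :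
  (forall n : nat, complete (cube n)) /\
  (forall (A : finPoset) (f : A -> A),
      complete A -> monotone f -> (forall x, f (f x) = f x) ->
      exists B : finPoset, complete B /\
        exists (r : A -> B) (s : B -> A),
          [/\ monotone r, monotone s,
              (forall b, r (s b) = b) & (forall a, s (r a) = f a)]) /\
  (forall A : finPoset, complete A ->
      exists (n : nat) (r : cube n -> A) (s : A -> cube n),
        [/\ monotone r, monotone s & forall a, r (s a) = a]).
Proof.
split; first exact: cube_complete.
split; last exact: retract_cube.
by move=> A f HA f_mono f_idem; apply: split_idempotent.
Qed.
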